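(* Let $A$ be a commutative nilpotent $\mathbb{F}_p$-algebra of finite dimension, with $A^e\neq0$ and $A^{e+1}=0$ for some $e\ge1$. With $N_t$, $q_t$, $s(\cdot)$, $i(\cdot)$ and $\delta(m)=\lfloor m^2/4\rfloor$ as defined below, \[ i(A)\le \sum_{t=1}^{e-1}\bigl(p^{-\delta(q_t)}-p^{-\delta(q_{t+1})}\bigr)s(N_t)+p^{-\delta(q_e)}s(N_e), \] where $i(A)$ is the number of ideals of $A$.
   Context: Algebras are commutative, associative, not necessarily unital. $N_k=\{a\in A: x_1\cdots x_k a=0\ \forall x_1,\dots,x_k\in A\}$ (so $N_0=0$, $N_e=A$). For $x\in A$, $q(x)=\dim_{\mathbb{F}_p}(\mathbb{F}_px+Ax)$ and $q_t=\min_{x\in N_t\setminus N_{t-1}}q(x)$. For a subspace $J$, $s(J)$ is the number of $\mathbb{F}_p$-subspaces of $J$. *)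

From HB Require Import structures.
From mathcomp Require Import all_boot all_order all_algebra all_field.
Set Implicit Arguments. Unset Strict Implicit. Unset Printing Implicit Defensive.
Import GRing.Theory.
Local Open Scope ring_scope.

(* The underlying F_p-vector space of an n-dimensional algebra: 'rV['F_p]_n.
   The (non-unital) multiplication is an explicit operation [mul]. *)
Notation vecA p n := 'rV['F_p]_n.

(* Axioms: commutative, associative, F_p-bilinear (left-linear + commutative). *)
Definition is_comm_alg_mul (p n : nat) (mul : vecA p n -> vecA p n -> vecA p n) : Prop :=
  [/\ (forall a b, mul a b = mul b a),
      (forall a b c, mul a (mul b c) = mul (mul a b) c),
      (forall a b c, mul (a + b) c = mul a c + mul b c) &
      (forall (k : 'F_p) a b, mul (k *: a) b = k *: mul a b)].

Definition prodA (T : Type) (mul : T -> T -> T) (xs : seq T) (a : T) : T :=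
  foldr mul a xs.

Definition Nk (p n : nat) (mul : vecA p n -> vecA p n -> vecA p n) (k : nat)
  : {set vecA p n} :=
  [set a | [forall xs : k.-tuple (vecA p n), prodA mul xs a == 0]].

Definition qx (p n : nat) (mul : vecA p n -> vecA p n -> vecA p n) (x : vecA p n)
  : nat :=
  \dim (<[x]> + span [seq mul a x | a <- enum [set: vecA p n]])%VS.

(* q_t = min_{x in N_t \ N_{t-1}} q(x).  (The default value n.+1 for an empty
   range is never used under the hypotheses, where N_t \ N_{t-1} <> 0 for
   1 <= t <= e.) *)
Definition qt (p n : nat) (mul : vecA p n -> vecA p n -> vecA p n) (t : nat) : nat :=
  \big[minn/n.+1]_(x in Nk mul t :\: Nk mul t.-1) qx mul x.

Definition is_subspace (p n : nat) (S : {set vecA p n}) : bool :=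
  [&& (0 : vecA p n) \in S,
      [forall x in S, forall y in S, x + y \in S] &
      [forall k : 'F_p, forall x in S, k *: x \in S]].

Definition sJ (p n : nat) (J : {set vecA p n}) : nat :=
  #|[set S : {set vecA p n} | is_subspace S & S \subset J]|.

Definition is_ideal (p n : nat) (mul : vecA p n -> vecA p n -> vecA p n)
  (I : {set vecA p n}) : bool :=
  is_subspace I && [forall a : vecA p n, forall x in I, mul a x \in I].

Definition iA (p n : nat) (mul : vecA p n -> vecA p n -> vecA p n) : nat :=
  #|[set I : {set vecA p n} | is_ideal mul I]|.

Definition delta (m : nat) : nat := (m * m) %/ 4.

From HB Require Import structures.
From mathcomp Require Import all_boot all_order all_algebra all_field.
From mathcomp Require Import zify ring.
Set Implicit Arguments. Unset Strict Implicit. Unset Printing Implicit Defensive.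
Import Order.TTheory GRing.Theory Num.Theory.
Local Open Scope ring_scope.

(* Let I be an ideal with I <= N_t but not I <= N_(t-1), and M = A I. An
   element x of I outside N_(t-1) has F_p x + A x <= F_p x + M, so
   q_t <= dim M + 1, and M <> I by Nakayama's lemma. Split a basis of M into a
   part F of size ceil(dim M / 2) and the rest, and complete the rest by a
   complement of M in I to a family P. The graphs of the linear maps <P> -> <F>
   are p^(|P||F|) >= p^delta(q_t) distinct subspaces S with S + M = I, so each
   of them generates I by Nakayama's lemma. Grouping the subspaces of N_t not
   contained in N_(t-1) by the ideal they generate gives
     i(N_t) - i(N_(t-1)) <= p^-delta(q_t) (s(N_t) - s(N_(t-1))),
   and the theorem follows by Abel summation from i(N_1) <= s(N_1), q_1 = 1. *)

Lemma bigminn_le (T : finType) (A : pred T) (F : T -> nat) m x :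
  x \in A -> (\big[minn/m]_(y in A) F y <= F x)%N.
Proof.
move=> Ax; rewrite unlock; have : x \in index_enum T by rewrite mem_index_enum.
elim: (index_enum T) => [|y s IHs] //=; rewrite in_cons => /predU1P[<-|/IHs].
  by rewrite Ax geq_minl.
by case: (y \in A) => //; rewrite geq_min => ->; rewrite orbT.
Qed.

Lemma card_subsets_split (T : finType) (P : pred {set T}) (J1 J2 : {set T}) :
  J1 \subset J2 ->
  #|[set X | P X & X \subset J2]| =
    (#|[set X | P X & X \subset J1]| +
     #|[set X | P X & (X \subset J2) && ~~ (X \subset J1)]|)%N.
Proof.
move=> sJ12; rewrite -(cardsID [set X : {set T} | X \subset J1]); congr (_ + _)%N.
  apply: eq_card => X; rewrite !inE; case: (P X) => //=.
  by apply/andP/idP => [[]|sXJ1] //; rewrite (subset_trans sXJ1 sJ12).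
by apply: eq_card => X; rewrite !inE andbC -!andbA.
Qed.

Lemma abel_bound (R : numDomainType) (i s w : nat -> R) E : (0 < E)%N ->
  i 1%N <= w 1%N * s 1%N ->
  (forall t, (0 < t)%N -> i t.+1 - i t <= w t.+1 * (s t.+1 - s t)) ->
  i E <= \sum_(1 <= t < E) (w t - w t.+1) * s t + w E * s E.
Proof.
move=> + i1 istep; elim: E => // -[_ _|E IHE _]; first by rewrite big_geq // add0r.
have step := istep E.+1 isT; rewrite lerBlDl in step.
apply: le_trans step _; rewrite big_nat_recr //=.
have -> : \sum_(1 <= t < E.+1) (w t - w t.+1) * s t + (w E.+1 - w E.+2) * s E.+1
          + w E.+2 * s E.+2 =
          (\sum_(1 <= t < E.+1) (w t - w t.+1) * s t + w E.+1 * s E.+1) +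
          w E.+2 * (s E.+2 - s E.+1) by ring.
by rewrite lerD2r IHE.
Qed.

Lemma delta_mono m k : (m <= k)%N -> (delta m <= delta k)%N.
Proof. by move=> le_mk; apply/leq_div2r/leq_mul. Qed.

Lemma half_succ_le m : ((m.+1)./2 <= m)%N.
Proof. rewrite -divn2; lia. Qed.

Lemma delta_le_split m d : (m < d)%N ->
  (delta m.+1 <= (d - (m.+1)./2) * (m.+1)./2)%N.
Proof. rewrite /delta -divn2; nia. Qed.

Section Subspace.
Variables p n : nat.
Local Notation vT := 'rV['F_p]_n.

Lemma subspaceP (S : {set vT}) :
  reflect [/\ 0 \in S, (forall x y, x \in S -> y \in S -> x + y \in S) &
             (forall k x, x \in S -> k *: x \in S)] (is_subspace S).
Proof.
apply: (iffP and3P) => [[S0 /forallP SD /forallP SZ]|[S0 SD SZ]]; split => //.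
- by move=> x y Sx Sy; move/implyP: (SD x) => /(_ Sx)/forall_inP/(_ y Sy).
- by move=> k x Sx; move/forall_inP: (SZ k) => /(_ x Sx).
- by apply/forall_inP => x Sx; apply/forall_inP => y Sy; apply: SD.
- by apply/forallP => k; apply/forall_inP => x Sx; apply: SZ.
Qed.

Lemma subspace_sum (S : {set vT}) (I : Type) (r : seq I) (P : pred I) (F : I -> vT) :
  is_subspace S -> (forall i, P i -> F i \in S) -> \sum_(i <- r | P i) F i \in S.
Proof. by case/subspaceP => S0 SD _ SF; elim/big_ind: _. Qed.

Lemma subspace_span (S : {set vT}) (X : seq vT) v :
  is_subspace S -> {subset X <= S} -> v \in <<X>>%VS -> v \in S.
Proof.
move=> subS sXS; rewrite -[X]in_tupleE => /coord_span ->.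
apply: subspace_sum => // i _; case/subspaceP: subS => _ _ -> //.
by rewrite sXS ?mem_nth.
Qed.

Lemma mem_span_enum (S : {set vT}) v :
  is_subspace S -> (v \in <<enum S>>%VS) = (v \in S).
Proof.
move=> subS; apply/idP/idP => [|Sv]; last by rewrite memv_span ?mem_enum.
by apply: subspace_span => // x; rewrite mem_enum.
Qed.

Lemma subspace_image k (f : 'rV['F_p]_k -> vT) :
  {morph f : a b / a + b} -> (forall c, {morph f : a / c *: a}) ->
  is_subspace [set f a | a in 'rV['F_p]_k].
Proof.
move=> fD fZ; have f0 : f 0 = 0.
  by rewrite -[0 in LHS](scale0r (0 : 'rV['F_p]_k)) fZ scale0r.
apply/subspaceP; split.
- by rewrite -f0 imset_f.
- by move=> _ _ /imsetP[a _ ->] /imsetP[b _ ->]; rewrite -fD imset_f.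
- by move=> c _ /imsetP[a _ ->]; rewrite -fZ imset_f.
Qed.

End Subspace.

Section Algebra.
Variables p n : nat.
Local Notation vT := 'rV['F_p]_n.
Variable mul : vT -> vT -> vT.
Hypothesis mulP : is_comm_alg_mul mul.

Lemma mulvC a b : mul a b = mul b a. Proof. by case: mulP. Qed.
Lemma mulvA a b c : mul a (mul b c) = mul (mul a b) c. Proof. by case: mulP. Qed.
Lemma mulvDl a b c : mul (a + b) c = mul a c + mul b c. Proof. by case: mulP. Qed.
Lemma mulvZl k a b : mul (k *: a) b = k *: mul a b. Proof. by case: mulP. Qed.
Lemma mulvDr a b c : mul a (b + c) = mul a b + mul a c.
Proof. by rewrite mulvC mulvDl !(mulvC _ a). Qed.
Lemma mulvZr k a b : mul a (k *: b) = k *: mul a b.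
Proof. by rewrite mulvC mulvZl mulvC. Qed.
Lemma mulv0 a : mul a 0 = 0.
Proof. by rewrite -[0 in LHS](scale0r (0 : vT)) mulvZr scale0r. Qed.

Lemma prodA0 xs : prodA mul xs 0 = 0.
Proof. by elim: xs => //= x xs ->; rewrite mulv0. Qed.
Lemma prodAD xs a b : prodA mul xs (a + b) = prodA mul xs a + prodA mul xs b.
Proof. by elim: xs => //= x xs ->; rewrite mulvDr. Qed.
Lemma prodAZ xs k a : prodA mul xs (k *: a) = k *: prodA mul xs a.
Proof. by elim: xs => //= x xs ->; rewrite mulvZr. Qed.
Lemma prodA_mul xs b a : prodA mul xs (mul b a) = mul b (prodA mul xs a).
Proof. by elim: xs => //= x xs ->; rewrite mulvA (mulvC x b) -mulvA. Qed.
Lemma prodA_cat xs ys a : prodA mul (xs ++ ys) a = prodA mul xs (prodA mul ys a).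
Proof. exact: foldr_cat. Qed.

Lemma NkP k a :
  reflect (forall xs, size xs = k -> prodA mul xs a = 0) (a \in Nk mul k).
Proof.
rewrite inE; apply: (iffP forallP) => [Na xs sz_xs | Na xs].
  by have /eqP := Na (Tuple (introT eqP sz_xs)).
by rewrite Na ?size_tuple.
Qed.

Lemma Nk0 a : (a \in Nk mul 0) = (a == 0).
Proof.
by apply/NkP/eqP => [/(_ [::] erefl) // | -> xs _]; rewrite prodA0.
Qed.

Lemma Nk_subset k l : (k <= l)%N -> Nk mul k \subset Nk mul l.
Proof.
move=> /subnK <-; elim: (l - k)%N => // d IHd; apply: subset_trans IHd _.
apply/subsetP => a /NkP Na; apply/NkP => -[|x xs] //= [sz_xs].
by rewrite Na ?mulv0.
Qed.

Lemma idealP (I : {set vT}) :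
  reflect (is_subspace I /\ forall a x, x \in I -> mul a x \in I) (is_ideal mul I).
Proof.
apply: (iffP andP) => -[subI mulI]; split => //.
  by move=> a x Ix; have /forall_inP := forallP mulI a; apply.
by apply/forallP => a; apply/forall_inP => x; apply: mulI.
Qed.

Lemma prodA_ideal (I : {set vT}) xs x :
  is_ideal mul I -> x \in I -> prodA mul xs x \in I.
Proof. by case/idealP => _ mulI Ix; elim: xs => //= y xs; apply: mulI. Qed.

Lemma Nk_ideal k : is_ideal mul (Nk mul k).
Proof.
apply/idealP; split=> [|b a /NkP Na]; last first.
  by apply/NkP => xs sz_xs; rewrite prodA_mul Na ?mulv0.
apply/subspaceP; split=> [|x y|c x].
- by apply/NkP => xs _; rewrite prodA0.
- by move=> /NkP Nx /NkP Ny; apply/NkP => xs sz_xs; rewrite prodAD Nx ?Ny ?addr0.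
- by move=> /NkP Nx; apply/NkP => xs sz_xs; rewrite prodAZ Nx ?scaler0.
Qed.

Lemma ideal_subspace (I : {set vT}) : is_ideal mul I -> is_subspace I.
Proof. by case/andP. Qed.

Definition igen (S : {set vT}) : {set vT} :=
  \bigcap_(J | is_ideal mul J && (S \subset J)) J.

Lemma sub_igen (S : {set vT}) : S \subset igen S.
Proof. by apply/bigcapsP => J /andP[]. Qed.

Lemma igen_min (S J : {set vT}) : is_ideal mul J -> S \subset J -> igen S \subset J.
Proof. by move=> idJ sSJ; rewrite bigcap_inf ?idJ. Qed.

Lemma igen_ideal (S : {set vT}) : is_ideal mul (igen S).
Proof.
have subJ J : is_ideal mul J && (S \subset J) -> is_subspace J.
  by case/andP => /ideal_subspace.
apply/idealP; split=> [|a x /bigcapP Sx]; last first.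
  by apply/bigcapP => J /[dup] /andP[/idealP[_ mulJ] _] /Sx; apply: mulJ.
apply/subspaceP; split=> [|x y /bigcapP Sx /bigcapP Sy|c x /bigcapP Sx].
- by apply/bigcapP => J /subJ /subspaceP[].
- apply/bigcapP => J PJ; have /subspaceP[_ JD _] := subJ J PJ.
  by apply: JD; [apply: Sx | apply: Sy].
- by apply/bigcapP => J PJ; have /subspaceP[_ _ ->] // := subJ J PJ; apply: Sx.
Qed.

Definition mul_span (I : {set vT}) : {vspace vT} :=
  <<[seq mul a x | a <- enum [set: vT], x <- enum I]>>%VS.

Lemma mul_span_sub (I : {set vT}) :
  is_ideal mul I -> (mul_span I <= <<enum I>>)%VS.
Proof.
case/idealP => subI mulI; apply/span_subvP => _ /allpairsP[[a x] [_ /= Ix ->]].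
by rewrite (mem_span_enum _ subI) mulI // -mem_enum.
Qed.

Lemma qx_le_mul_span (I : {set vT}) x :
  x \in I -> (qx mul x <= (\dim (mul_span I)).+1)%N.
Proof.
move=> Ix; apply: leq_trans (dimv_add_leqif _ _).1 _.
rewrite -[(\dim _).+1]add1n leq_add ?dim_vline ?leq_b1 //.
apply/dimvS/span_subvP => _ /mapP[a _ ->]; apply: memv_span.
by apply: allpairs_f; rewrite mem_enum ?inE.
Qed.

Lemma qt_le_qx t x : x \in Nk mul t :\: Nk mul t.-1 -> (qt mul t <= qx mul x)%N.
Proof. exact: bigminn_le. Qed.

Lemma igen_subset_ideal (S J : {set vT}) :
  is_ideal mul J -> (igen S \subset J) = (S \subset J).
Proof.
move=> idJ; apply/idP/idP => [|sSJ]; last exact: igen_min.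
exact: subset_trans (sub_igen S).
Qed.

Lemma card_ideals_le_sJ (J : {set vT}) :
  (#|[set I | is_ideal mul I & I \subset J]| <= sJ J)%N.
Proof.
by apply/subset_leq_card/subsetP => I; rewrite !inE => /andP[/ideal_subspace -> ->].
Qed.

Lemma mul_span_Nk1 : mul_span (Nk mul 1) = 0%VS.
Proof.
apply/eqP; rewrite -subv0; apply/span_subvP => _ /allpairsP[[a x] [_ /= N1x ->]].
by rewrite memv0; move: N1x; rewrite mem_enum => /NkP/(_ [:: a] erefl) /= ->.
Qed.

Lemma delta_qt1 y : y \in Nk mul 1 -> y != 0 -> delta (qt mul 1) = 0%N.
Proof.
move=> N1y y_neq0; have N1y' : y \in Nk mul 1 :\: Nk mul 0 by rewrite inE N1y Nk0 y_neq0.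
have q1_le1 : (qt mul 1 <= 1)%N.
  by rewrite (leq_trans (qt_le_qx N1y')) // (leq_trans (qx_le_mul_span N1y)) // mul_span_Nk1 dimv0.
by apply/eqP; rewrite -leqn0 (leq_trans (delta_mono q1_le1)).
Qed.

End Algebra.

Section Combination.
Local Unset Implicit Arguments.
Context {F : fieldType} {vT : vectType F}.

Definition comb (X : seq vT) (c : 'rV[F]_(size X)) : vT := \sum_i c 0 i *: X`_i.

Lemma combD (X : seq vT) : {morph comb X : c d / c + d}.
Proof.
by move=> c d; rewrite /comb -big_split; apply: eq_bigr => i _; rewrite mxE scalerDl.
Qed.

Lemma combZ (X : seq vT) k : {morph comb X : c / k *: c}.
Proof.
by move=> c; rewrite /comb scaler_sumr; apply: eq_bigr => i _; rewrite mxE scalerA.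
Qed.

Lemma comb_span (X : seq vT) c : comb X c \in <<X>>%VS.
Proof. by apply: memv_suml => i _; rewrite memvZ ?memv_span ?mem_nth. Qed.

Lemma comb_onto {X : seq vT} v : v \in <<X>>%VS -> exists c, comb X c = v.
Proof.
move=> Xv; exists (\row_i coord (in_tuple X) i v).
by rewrite [RHS](coord_span (X := in_tuple X) Xv); apply: eq_bigr => i _; rewrite mxE.
Qed.

Lemma comb_inj {X : seq vT} : free X -> injective (comb X).
Proof.
rewrite -[X in free X]in_tupleE => freeX c d eq_cd; apply/rowP => j.
by rewrite -(coord_sum_free (c 0) j freeX) -(coord_sum_free (d 0) j freeX) -!/(comb _ _) eq_cd.
Qed.

Lemma split_basis {U V : {vspace vT}} {j : nat} : (U <= V)%VS -> (j <= \dim U)%N ->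
  exists Fs Ps : seq vT, [/\ free (Fs ++ Ps), <<Fs ++ Ps>>%VS = V, (<<Fs>> <= U)%VS,
                           size Fs = j & size Ps = (\dim V - j)%N].
Proof.
move=> sUV le_jU; exists (take j (vbasis U)), (drop j (vbasis U) ++ vbasis (V :\: U)).
rewrite catA cat_take_drop size_cat size_drop !size_tuple.
split.
- rewrite cat_free !(basis_free (vbasisP _)) !(span_basis (vbasisP _)) /=.
  by apply/directv_addP; rewrite capvC capv_diff.
- by rewrite span_cat !(span_basis (vbasisP _)) addvC addv_diff; apply/addv_idPl.
- by apply/span_subvP => u /mem_take; apply: vbasis_mem.
- exact/minn_idPl.
- by have := dimv_cap_compl V U; rewrite (capv_idPr sUV) => <-; lia.
Qed.

End Combination.

Section Graph.
Variables p n : nat.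
Local Notation vT := 'rV['F_p]_n.
Variables Fs Ps : seq vT.
Hypothesis free_FP : free (Fs ++ Ps).

Definition graph (B : 'M['F_p]_(size Ps, size Fs)) : {set vT} :=
  [set comb Fs (a *m B) + comb Ps a | a in 'rV['F_p]_(size Ps)].

Lemma graph_subspace B : is_subspace (graph B).
Proof.
apply: subspace_image => [a b | k a]; first by rewrite mulmxDl !combD addrACA.
by rewrite -scalemxAl !combZ scalerDr.
Qed.

Lemma graph_sub (I : {set vT}) B :
  is_subspace I -> {subset Fs ++ Ps <= I} -> graph B \subset I.
Proof.
move=> subI sFPI; have /subspaceP[_ ID _] := subI.
have combI (X : seq vT) (c : 'rV['F_p]_(size X)) : {subset X <= Fs ++ Ps} -> comb X c \in I.
  by move=> sX; apply: subspace_span subI _ (comb_span X c) => x /sX /sFPI.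
apply/subsetP => _ /imsetP[a _ ->].
by apply: ID; apply: combI => x Xx; rewrite mem_cat Xx ?orbT.
Qed.

Lemma graph_cover B v :
  v \in <<Fs ++ Ps>>%VS -> exists2 s, s \in graph B & v - s \in <<Fs>>%VS.
Proof.
rewrite span_cat => /memv_addP[f Ff [_ /comb_onto[a <-] ->]].
exists (comb Fs (a *m B) + comb Ps a); first exact: imset_f.
by rewrite opprD addrACA subrr addr0 memvB ?comb_span.
Qed.

Lemma graph_inj : injective graph.
Proof.
move: free_FP; rewrite cat_free => /and3P[freeF freeP /directv_add_unique dxFP].
move=> B B' eq_graph; apply/row_matrixP => r; rewrite !rowE; set a := delta_mx 0 r.
have : comb Fs (a *m B) + comb Ps a \in graph B' by rewrite -eq_graph; apply: imset_f.
case/imsetP => a' _ /eqP.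
rewrite (dxFP _ _ _ _ (comb_span _ _) (comb_span _ _) (comb_span _ _) (comb_span _ _)).
rewrite xpair_eqE => /andP[/eqP eqB /eqP /(comb_inj freeP) eqa].
by rewrite -eqa in eqB; apply: (comb_inj freeF _ _ eqB).
Qed.

Lemma card_graphs : prime p ->
  #|[set graph B | B in 'M['F_p]_(size Ps, size Fs)]| = (p ^ (size Ps * size Fs))%N.
Proof.
move=> p_prime; rewrite card_imset; last exact: graph_inj.
by rewrite card_mx card_Fp.
Qed.

End Graph.

Section Nilpotent.
Variables p n : nat.
Local Notation vT := 'rV['F_p]_n.
Variables (mul : vT -> vT -> vT) (e : nat).
Hypothesis mulP : is_comm_alg_mul mul.
Hypothesis nil_e : forall (xs : e.-tuple vT) a, prodA mul xs a = 0.

Lemma prodA_nil xs a : (e <= size xs)%N -> prodA mul xs a = 0.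
Proof.
move=> le_e_xs; rewrite -(cat_take_drop e xs) prodA_cat.
have sz_take : size (take e xs) == e by rewrite size_takel.
exact: (nil_e (Tuple sz_take)).
Qed.

Lemma mem_Nk_nil a : a \in Nk mul e.
Proof. by apply/NkP => xs sz_xs; rewrite prodA_nil ?sz_xs. Qed.

Lemma prodA_Nk1 xs a : (0 < e)%N -> size xs = e.-1 -> prodA mul xs a \in Nk mul 1.
Proof.
move=> e_gt0 sz_xs; apply/NkP => -[|b [|? ?]] //= _.
by rewrite -[mul b _]/(prodA mul (b :: xs) a) prodA_nil //= sz_xs prednK.
Qed.

Lemma prodA_preim_subspace xs (J : {set vT}) :
  is_subspace J -> is_subspace [set u | prodA mul xs u \in J].
Proof.
case/subspaceP => J0 JD JZ; apply/subspaceP; split=> [|x y|k x]; rewrite !inE.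
- by rewrite (prodA0 mulP).
- by move=> Jx Jy; rewrite (prodAD mulP) JD.
- by move=> Jx; rewrite (prodAZ mulP) JZ.
Qed.

Lemma nakayama (I J : {set vT}) :
  is_ideal mul J ->
  (forall v, v \in I -> exists2 s, s \in J & v - s \in mul_span mul I) ->
  I \subset J.
Proof.
move=> idJ AIcov; have subJ := ideal_subspace idJ; have /subspaceP[J0 JD _] := subJ.
suff prodJ d xs v : v \in I -> (e <= size xs + d)%N -> prodA mul xs v \in J.
  by apply/subsetP => v Iv; apply: (prodJ e [::]).
elim: d xs v => [|d IHd] xs v Iv le_e.
  by rewrite prodA_nil ?J0 // -[size xs]addn0.
have [s Js AIvs] := AIcov v Iv.
rewrite -(subrK s v) (prodAD mulP); apply: JD; last exact: prodA_ideal.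
suff : v - s \in [set u | prodA mul xs u \in J] by rewrite inE.
apply: subspace_span (prodA_preim_subspace xs subJ) _ AIvs.
move=> _ /allpairsP[[a w] [_ /= Iw ->]]; rewrite inE (prodA_mul mulP).
rewrite -[mul a _]/(prodA mul (a :: xs) w); apply: IHd; first by rewrite -mem_enum.
by rewrite /= addSnnS.
Qed.

Lemma mul_span_dim_lt (I : {set vT}) x : is_ideal mul I -> x \in I -> x != 0 ->
  (\dim (mul_span mul I) < \dim <<enum I>>)%N.
Proof.
move=> idI Ix x_neq0; rewrite (ltn_leqif (dimv_leqif_sup (mul_span_sub idI))).
apply: contra x_neq0 => sIAI; rewrite -(Nk0 mulP); apply: (subsetP _ x Ix).
apply: nakayama (Nk_ideal mulP 0) _ => v Iv; exists 0; first by rewrite (Nk0 mulP).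
by rewrite subr0 (subvP sIAI) // (mem_span_enum _ (ideal_subspace idI)).
Qed.

Hypothesis p_prime : prime p.

Lemma card_generators (I : {set vT}) : is_ideal mul I ->
  (\dim (mul_span mul I) < \dim <<enum I>>)%N ->
  (p ^ delta (\dim (mul_span mul I)).+1
     <= #|[set S | is_subspace S & igen mul S == I]|)%N.
Proof.
move=> idI; set m := \dim _; set d := \dim _ => lt_md.
have [Fs [Ps [freeFP spanFP sFAI szF szP]]] :=
  split_basis (mul_span_sub idI) (half_succ_le m).
have subI := ideal_subspace idI.
have memI v : (v \in <<Fs ++ Ps>>%VS) = (v \in I) by rewrite spanFP mem_span_enum.
apply: leq_trans (_ : p ^ (size Ps * size Fs) <= _)%N.
  by rewrite leq_exp2l ?prime_gt1 // szF szP delta_le_split.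
rewrite -(card_graphs freeFP p_prime); apply/subset_leq_card/subsetP => _ /imsetP[B _ ->].
have sBI : graph B \subset I by apply: graph_sub => // x FPx; rewrite -memI memv_span.
rewrite inE graph_subspace eqEsubset igen_min //=.
apply: nakayama (igen_ideal _ _) _ => v Iv.
have [s Bs vs] : exists2 s, s \in graph B & v - s \in <<Fs>>%VS.
  by apply: graph_cover; rewrite memI.
by exists s; [apply: subsetP (sub_igen _ _) _ Bs | apply: subvP sFAI _ vs].
Qed.

Lemma card_generators_layer t (I : {set vT}) :
  is_ideal mul I -> I \subset Nk mul t -> ~~ (I \subset Nk mul t.-1) ->
  (p ^ delta (qt mul t) <= #|[set S | is_subspace S & igen mul S == I]|)%N.
Proof.
move=> idI sIt /subsetPn[x Ix Nx].
have Nx_t : x \in Nk mul t :\: Nk mul t.-1 by rewrite inE Nx (subsetP sIt).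
have x_neq0 : x != 0 by apply: contraNneq Nx => ->; apply/NkP => xs _; apply: prodA0.
apply: leq_trans (card_generators idI (mul_span_dim_lt idI Ix x_neq0)).
rewrite leq_exp2l ?prime_gt1 //; apply/delta_mono/(leq_trans (qt_le_qx Nx_t)).
exact: qx_le_mul_span.
Qed.

Lemma card_ideal_layer t :
  (#|[set I | is_ideal mul I & (I \subset Nk mul t) && ~~ (I \subset Nk mul t.-1)]|
     * p ^ delta (qt mul t)
   <= #|[set S | is_subspace S & (S \subset Nk mul t) && ~~ (S \subset Nk mul t.-1)]|)%N.
Proof.
have igen_Nk S k := igen_subset_ideal S (Nk_ideal mulP k).
set ideals := [set I | _]; rewrite -[X in (_ <= X)%N]sum1_card.
rewrite (partition_big (igen mul) (mem ideals)) /=.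
  rewrite -sum1_card big_distrl /= leq_sum // => I; rewrite inE mul1n.
  case/andP => idI /andP[sIt nsIt]; apply: leq_trans (card_generators_layer idI sIt nsIt) _.
  rewrite sum1dep_card; apply: subset_leq_card; apply/subsetP => S.
  rewrite !inE => /andP[-> /eqP genS]; move: sIt nsIt.
  by rewrite -genS !igen_Nk => -> ->; rewrite eqxx.
by move=> S; rewrite !inE !igen_Nk => /andP[_ ->]; rewrite igen_ideal.
Qed.

Lemma ideal_count_step t :
  (#|[set I | is_ideal mul I & I \subset Nk mul t.+1]|%:R
     - #|[set I | is_ideal mul I & I \subset Nk mul t]|%:R : rat)
  <= p%:R ^- delta (qt mul t.+1) * ((sJ (Nk mul t.+1))%:R - (sJ (Nk mul t))%:R).
Proof.
have addKl (x y : rat) : x + y - x = y by rewrite addrC addKr.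
rewrite /sJ !(card_subsets_split _ (Nk_subset mulP (leqnSn t))) !natrD !addKl.
rewrite ler_pdivlMl ?exprn_gt0 ?ltr0n ?prime_gt0 // -natrX -natrM ler_nat mulnC.
exact: card_ideal_layer.
Qed.

Lemma iA_ideals_Nk : iA mul = #|[set I | is_ideal mul I & I \subset Nk mul e]|.
Proof.
apply: eq_card => I; rewrite !inE andb_idr // => _.
by apply/subsetP => x _; apply: mem_Nk_nil.
Qed.

End Nilpotent.

Theorem corollary2p5 (p n : nat) (mul : 'rV['F_p]_n -> 'rV['F_p]_n -> 'rV['F_p]_n)
  (e : nat) :
  prime p ->
  is_comm_alg_mul mul ->
  (0 < e)%N ->
  (exists (xs : e.-1.-tuple 'rV['F_p]_n) (a : 'rV['F_p]_n), prodA mul xs a != 0) ->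
  (forall (xs : e.-tuple 'rV['F_p]_n) (a : 'rV['F_p]_n), prodA mul xs a = 0) ->
  (iA mul)%:R <=
    \sum_(1 <= t < e)
       ((p%:R : rat) ^- delta (qt mul t) - (p%:R : rat) ^- delta (qt mul t.+1))
         * (sJ (Nk mul t))%:R
    + (p%:R : rat) ^- delta (qt mul e) * (sJ (Nk mul e))%:R.
Proof.
move=> p_prime mulP e_gt0 [xs [a xa_neq0]] nil_e.
have N1xa := prodA_Nk1 nil_e a e_gt0 (size_tuple xs).
rewrite (iA_ideals_Nk nil_e).
apply: (abel_bound (i := fun t => #|[set I | is_ideal mul I & I \subset Nk mul t]|%:R)
                   (s := fun t => (sJ (Nk mul t))%:R)) => // [|t _].
  by rewrite (delta_qt1 mulP N1xa xa_neq0) expr0 invr1 mul1r ler_nat card_ideals_le_sJ.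
exact: ideal_count_step.
Qed.
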